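(* Let $a<b$, let $N\ge1$ and $T\ge1$. For a probability distribution function $F$ on $[a,b]$ and $y\in[a,b]$ let $\mathrm{CRPS}(F,y)=\int_a^b(F(u)-H(u-y))^2\,du$, where $H(x)=0$ for $x<0$ and $H(x)=1$ for $x\ge0$. Consider the online protocol: set $w_{i,1}=\frac1N$ for $1\le i\le N$; for $t=1,\dots,T$: experts $i=1,\dots,N$ announce probability distribution functions $F_{i,t}$ on $[a,b]$; the learner announces $$F_t(u)=\frac12-\frac14\ln\frac{\sum_{i=1}^N w^*_{i,t}e^{-2(F_{i,t}(u))^2}}{\sum_{i=1}^N w^*_{i,t}e^{-2(1-F_{i,t}(u))^2}},\qquad w^*_{i,t}=\frac{w_{i,t}}{\sum_{j=1}^N w_{j,t}};$$ an outcome $y_t\in[a,b]$ is revealed (arbitrarily, possibly adversarially); and the weights are updated by $w_{i,t+1}=w_{i,t}\,e^{-\frac{2}{b-a}\mathrm{CRPS}(F_{i,t},y_t)}$. Then for every $1\le i\le N$, $$\sum_{t=1}^T\mathrm{CRPS}(F_t,y_t)\le\sum_{t=1}^T\mathrm{CRPS}(F_{i,t},y_t)+\frac{b-a}{2}\ln N.$$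
   Context: A probability distribution function on $[a,b]$ is a non-decreasing function $F:[a,b]\to[0,1]$ with $F(a)=0$, $F(b)=1$, left-continuous and having a right limit at each point. *)

From Stdlib Require Import Reals Lra.
From Coquelicot Require Import Coquelicot.
Open Scope R_scope.

Fixpoint sumR (n : nat) (f : nat -> R) : R :=
  match n with
  | O => 0
  | S m => sumR m f + f m
  end.

(* Probability distribution function on [a,b]: non-decreasing, F a = 0,
   F b = 1, values in [0,1], left-continuous and with a right limit at each
   point of [a,b] (left-continuity at a and right limit at b are vacuous
   relative to [a,b]). *)
Definition is_distribution (a b : R) (F : R -> R) : Prop :=
  (forall u v, a <= u -> u <= v -> v <= b -> F u <= F v) /\
  (forall u, a <= u <= b -> 0 <= F u <= 1) /\
  F a = 0 /\ F b = 1 /\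
  (forall x, a < x <= b -> filterlim F (at_left x) (locally (F x))) /\
  (forall x, a <= x < b -> exists l : R, filterlim F (at_right x) (locally l)).

Definition Heav (x : R) : R := if Rlt_dec x 0 then 0 else 1.

Definition CRPS (a b : R) (F : R -> R) (y : R) : R :=
  RInt (fun u => (F u - Heav (u - y)) ^ 2) a b.

(* Expert predictions: Fexp i t is F_{i+1,t+1}; outcomes: y t is y_{t+1}.
   weight a b N Fexp y i t is w_{i+1,t+1}. *)
Fixpoint weight (a b : R) (N : nat) (Fexp : nat -> nat -> R -> R) (y : nat -> R)
  (i t : nat) : R :=
  match t with
  | O => 1 / INR N
  | S s => weight a b N Fexp y i s * exp (- (2 / (b - a)) * CRPS a b (Fexp i s) (y s))
  end.

Definition wstar (a b : R) (N : nat) (Fexp : nat -> nat -> R -> R) (y : nat -> R)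
  (i t : nat) : R :=
  weight a b N Fexp y i t / sumR N (fun j => weight a b N Fexp y j t).

Definition learner (a b : R) (N : nat) (Fexp : nat -> nat -> R -> R) (y : nat -> R)
  (t : nat) (u : R) : R :=
  1 / 2 - 1 / 4 * ln (sumR N (fun i => wstar a b N Fexp y i t * exp (-2 * (Fexp i t u) ^ 2))
                      / sumR N (fun i => wstar a b N Fexp y i t * exp (-2 * (1 - Fexp i t u) ^ 2))).

(* For weights p and forecasts x_i in [0,1], the aggregated forecast
     g = 1/2 - 1/4 ln (sum_i p_i e^{-2 x_i^2} / sum_i p_i e^{-2 (1 - x_i)^2})
   satisfies (g - w)^2 <= -1/2 ln sum_i p_i e^{-2 (x_i - w)^2} for both outcomes w in {0,1}:
   the squared loss is 2-mixable, which reduces to Hoeffding's lemma.  Applying this at every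
   u with w = H(u - y) and integrating over [a,b], the concavity of
   x |-> -1/2 ln sum_i p_i e^{-2 x_i} (bounded by its tangent plane) moves the integral inside
   the logarithm:
     CRPS(F_t, y_t) <= -(b-a)/2 ln sum_i w*_{i,t} e^{-2 CRPS(F_{i,t}, y_t)/(b-a)}
                     = -(b-a)/2 ln (W_{t+1} / W_t),
   with W_t the total weight.  Summing over t telescopes to -(b-a)/2 ln W_T, and
   W_T >= w_{i,T} = e^{-2 L_i/(b-a)} / N, where L_i is the cumulative loss of expert i.
   All CRPS integrands are monotone on either side of y, which is why they are integrable. *)

From Stdlib Require Import Reals Lra Lia List RList Zfloor.
From Coquelicot Require Import Coquelicot.
Open Scope R_scope.

Lemma sumR_ext n f g : (forall i, (i < n)%nat -> f i = g i) -> sumR n f = sumR n g.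
Proof.
  induction n as [|n IH]; intros Hfg; simpl; [reflexivity|].
  rewrite IH by (intros; apply Hfg; lia). rewrite Hfg by lia. reflexivity.
Qed.

Lemma sumR_le n f g : (forall i, (i < n)%nat -> f i <= g i) -> sumR n f <= sumR n g.
Proof.
  induction n as [|n IH]; intros Hfg; simpl; [lra|].
  assert (sumR n f <= sumR n g) by (apply IH; intros; apply Hfg; lia).
  assert (f n <= g n) by (apply Hfg; lia). lra.
Qed.

Lemma sumR_plus n f g : sumR n (fun i => f i + g i) = sumR n f + sumR n g.
Proof. induction n as [|n IH]; simpl; [ring|]. rewrite IH. ring. Qed.

Lemma sumR_scal n c f : sumR n (fun i => c * f i) = c * sumR n f.
Proof. induction n as [|n IH]; simpl; [ring|]. rewrite IH. ring. Qed.

Lemma sumR_const n c : sumR n (fun _ => c) = INR n * c.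
Proof. induction n as [|n IH]; simpl sumR; [simpl; ring|]. rewrite IH, S_INR. ring. Qed.

Lemma sumR_shift n f : sumR (S n) f = f O + sumR n (fun i => f (S i)).
Proof. induction n as [|n IH]; simpl sumR in *; [ring|]. rewrite IH. ring. Qed.

Lemma sumR_telescope n (h : nat -> R) : sumR n (fun i => h (S i) - h i) = h n - h O.
Proof. induction n as [|n IH]; simpl; [ring|]. rewrite IH. ring. Qed.

Lemma sumR_nonneg n f : (forall i, (i < n)%nat -> 0 <= f i) -> 0 <= sumR n f.
Proof.
  intros Hf. rewrite <- (Rmult_0_r (INR n)), <- sumR_const. now apply sumR_le.
Qed.

Lemma sumR_ge_term n f i :
  (forall j, (j < n)%nat -> 0 <= f j) -> (i < n)%nat -> f i <= sumR n f.
Proof.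
  induction n as [|n IH]; intros Hf Hi; [lia|]. simpl.
  assert (0 <= sumR n f) by (apply sumR_nonneg; intros; apply Hf; lia).
  assert (0 <= f n) by (apply Hf; lia).
  destruct (Nat.eq_dec i n) as [->|Hin]; [lra|].
  assert (f i <= sumR n f) by (apply IH; [intros; apply Hf|]; lia). lra.
Qed.

Lemma sumR_mult_pos n (p e : nat -> R) :
  (forall i, (i < n)%nat -> 0 <= p i) -> 0 < sumR n p ->
  (forall i, (i < n)%nat -> 0 < e i) -> 0 < sumR n (fun i => p i * e i).
Proof.
  induction n as [|n IH]; intros Hp Hs He; simpl in *; [lra|].
  assert (0 <= p n) by (apply Hp; lia). assert (0 < e n) by (apply He; lia).
  destruct (Rle_lt_dec (sumR n p) 0) as [Hle|Hlt].
  - assert (0 <= sumR n (fun i => p i * e i)).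
    { apply sumR_nonneg. intros i Hi.
      assert (0 <= p i) by (apply Hp; lia). assert (0 < e i) by (apply He; lia). nra. }
    nra.
  - assert (0 < sumR n (fun i => p i * e i))
      by (apply IH; [intros; apply Hp | | intros; apply He]; lia || lra).
    nra.
Qed.

Lemma pos_Rl_map_seq (g : nat -> R) (m s i : nat) :
  (i < m)%nat -> pos_Rl (map g (seq s m)) i = g (s + i)%nat.
Proof.
  revert s i. induction m as [|m IH]; intros s i Hi; [lia|].
  destruct i as [|i]; simpl.
  - f_equal; lia.
  - rewrite IH by lia. f_equal; lia.
Qed.

Section UniformGrid.
Variables (a b : R) (n : nat).
Hypotheses (Hab : a < b) (Hn : (0 < n)%nat).

Definition mesh : R := (b - a) / INR n.
Definition node (r : R) : R := a + r * mesh.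
Definition grid : list R := map (fun k => node (INR k)) (seq 0 (S n)).
Definition cell (t : R) : Z := Zfloor ((t - a) / mesh).

Lemma mesh_pos : 0 < mesh.
Proof. apply Rdiv_lt_0_compat; [lra | apply lt_0_INR; exact Hn]. Qed.

Lemma node_le r s : r <= s -> node r <= node s.
Proof. intros Hrs. unfold node. assert (H := mesh_pos). nra. Qed.

Lemma node_0 : node 0 = a.
Proof. unfold node. ring. Qed.

Lemma node_n : node (INR n) = b.
Proof. unfold node, mesh. field. apply not_0_INR. lia. Qed.

Lemma cell_spec k t : node (IZR k) <= t < node (IZR k + 1) -> cell t = k.
Proof.
  intros Ht. unfold cell, node in *. assert (H := mesh_pos).
  apply Zfloor_eq. split.
  - apply Rmult_le_reg_r with mesh; [exact H|]. unfold Rdiv. rewrite Rmult_assoc, Rinv_l; lra.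
  - apply Rmult_lt_reg_r with mesh; [exact H|]. unfold Rdiv. rewrite Rmult_assoc, Rinv_l; lra.
Qed.

Lemma cell_bounds t : a <= t < b ->
  (0 <= cell t < Z.of_nat n)%Z /\ node (IZR (cell t)) <= t < node (IZR (cell t) + 1).
Proof.
  intros Ht. assert (H := mesh_pos).
  assert (Hq : (t - a) / mesh * mesh = t - a) by (field; lra).
  destruct (Zfloor_bound ((t - a) / mesh)) as [Hlo Hhi]. fold (cell t) in Hlo, Hhi.
  split; [split|].
  - apply Zfloor_lub. apply Rmult_le_reg_r with mesh; lra.
  - apply lt_IZR. rewrite <- INR_IZR_INZ.
    apply Rle_lt_trans with ((t - a) / mesh); [exact Hlo|].
    apply Rmult_lt_reg_r with mesh; [exact H|]. rewrite Hq.
    replace (INR n * mesh) with (b - a) by (unfold mesh; field; apply not_0_INR; lia). lra.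
  - unfold node. split; nra.
Qed.

Lemma cell_open k t : node (INR k) < t < node (INR (S k)) -> cell t = Z.of_nat k.
Proof. intros Ht. apply cell_spec. rewrite <- INR_IZR_INZ, <- S_INR. lra. Qed.

Lemma grid_adapted (phi : R -> R) (g : nat -> R) :
  (forall k t, (k < n)%nat -> node (INR k) < t < node (INR (S k)) -> phi t = g k) ->
  adapted_couple phi a b grid (map g (seq 0 n)).
Proof.
  intros Hphi.
  assert (Hlen : length grid = S n) by (unfold grid; rewrite length_map, length_seq; reflexivity).
  assert (Hpos : forall k, (k <= n)%nat -> pos_Rl grid k = node (INR k)).
  { intros k Hk. unfold grid. now rewrite pos_Rl_map_seq by lia. }
  assert (Hlast : pred (length grid) = n) by (rewrite Hlen; reflexivity).
  repeat split.
  - intros k Hk. rewrite Hlast in Hk. rewrite !Hpos by lia.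
    apply node_le. rewrite S_INR. lra.
  - rewrite Hpos by lia. change (INR 0) with 0. rewrite node_0. symmetry. apply Rmin_left. lra.
  - rewrite Hlast, Hpos, node_n by lia. symmetry. apply Rmax_right. lra.
  - rewrite Hlen, length_map, length_seq. reflexivity.
  - intros k Hk t Ht. rewrite Hlast in Hk. unfold open_interval in Ht.
    rewrite !Hpos in Ht by lia. rewrite pos_Rl_map_seq by lia. now apply Hphi.
Qed.

Lemma Int_SF_grid (g : nat -> R) : Int_SF (map g (seq 0 n)) grid = mesh * sumR n g.
Proof.
  assert (Hshift : forall m s, Int_SF (map g (seq s m)) (map (fun k => node (INR k)) (seq s (S m)))
                               = mesh * sumR m (fun k => g (s + k)%nat)).
  { induction m as [|m IH]; intros s; [simpl; ring|].
    change (Int_SF (g s :: map g (seq (S s) m))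
              (node (INR s) :: map (fun k => node (INR k)) (seq (S s) (S m)))
            = mesh * sumR (S m) (fun k => g (s + k)%nat)).
    rewrite sumR_shift.
    rewrite (sumR_ext m _ (fun k => g (S s + k)%nat)) by (intros; f_equal; lia).
    rewrite Rmult_plus_distr_l, <- IH, Nat.add_0_r.
    simpl seq. cbn [map Int_SF]. unfold node. rewrite S_INR. ring. }
  exact (Hshift n O).
Qed.

Section MonotoneStep.
Variable f : R -> R.
Hypothesis Hf : forall u v, a <= u -> u <= v -> v <= b -> f u <= f v.

Definition lower_step (t : R) : R := f (node (IZR (cell t))).
(* At t = b the cell index is n, so [node (IZR (cell t) + 1)] lies beyond b: the absolute
   value keeps [jump_step] nonnegative there. *)
Definition jump_step (t : R) : R :=
  Rabs (f (node (IZR (cell t) + 1)) - f (node (IZR (cell t)))).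

Lemma lower_step_error t : a <= t <= b -> Rabs (f t - lower_step t) <= jump_step t.
Proof.
  intros Ht. unfold lower_step, jump_step.
  destruct (Req_dec t b) as [->|Htb].
  - assert (Hb : cell b = Z.of_nat n).
    { apply cell_spec. rewrite <- INR_IZR_INZ.
      assert (H := mesh_pos). assert (E := node_n). unfold node in *. split; nra. }
    rewrite Hb, <- INR_IZR_INZ, node_n, Rminus_diag, Rabs_R0. apply Rabs_pos.
  - destruct (cell_bounds t ltac:(lra)) as [[Hk0 Hkn] [Hlo Hhi]].
    assert (Hlo' : a <= node (IZR (cell t))).
    { rewrite <- node_0. apply node_le, IZR_le, Hk0. }
    assert (Hhi' : node (IZR (cell t) + 1) <= b).
    { rewrite <- node_n. apply node_le. rewrite INR_IZR_INZ, <- plus_IZR. apply IZR_le. lia. }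
    assert (f (node (IZR (cell t))) <= f t) by (apply Hf; lra).
    assert (f t <= f (node (IZR (cell t) + 1))) by (apply Hf; lra).
    rewrite !Rabs_right by lra. lra.
Qed.

Lemma sum_jumps :
  sumR n (fun k => Rabs (f (node (INR k + 1)) - f (node (INR k)))) = f b - f a.
Proof.
  rewrite (sumR_ext n _ (fun k => f (node (INR (S k))) - f (node (INR k)))).
  - rewrite (sumR_telescope n (fun k => f (node (INR k)))).
    change (INR 0) with 0. rewrite node_n, node_0. reflexivity.
  - intros k Hk. rewrite S_INR. apply Rabs_right, Rle_ge, Rge_le, Rge_minus, Rle_ge.
    assert (a <= node (INR k)) by (rewrite <- node_0; apply node_le, pos_INR).
    assert (node (INR k + 1) <= b).
    { rewrite <- node_n, <- S_INR. apply node_le, le_INR. lia. }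
    apply Hf; [| apply node_le |]; lra.
Qed.
End MonotoneStep.

End UniformGrid.

Lemma Riemann_integrable_monotone (f : R -> R) (a b : R) : a < b ->
  (forall u v, a <= u -> u <= v -> v <= b -> f u <= f v) -> Riemann_integrable f a b.
Proof.
  intros Hab Hf eps.
  assert (Heps := cond_pos eps).
  assert (Hfab : f a <= f b) by (apply Hf; lra).
  assert (Hr : 0 <= (b - a) * (f b - f a) / eps) by (apply Rle_mult_inv_pos; nra).
  destruct (nfloor_ex _ Hr) as [m Hm].
  set (n := S m).
  assert (Hn0 : (0 < n)%nat) by lia.
  assert (Hn : (b - a) * (f b - f a) / eps < INR n) by (unfold n; rewrite S_INR; lra).
  assert (Hlow : adapted_couple (lower_step a b n f) a b (grid a b n)
                   (map (fun k => f (node a b n (INR k))) (seq 0 n))).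
  { apply (grid_adapted a b n Hab Hn0). intros k t Hk Ht. unfold lower_step.
    rewrite (cell_open a b n Hab Hn0 k t Ht), <- INR_IZR_INZ. reflexivity. }
  assert (Hjump : adapted_couple (jump_step a b n f) a b (grid a b n)
      (map (fun k => Rabs (f (node a b n (INR k + 1)) - f (node a b n (INR k)))) (seq 0 n))).
  { apply (grid_adapted a b n Hab Hn0). intros k t Hk Ht. unfold jump_step.
    rewrite (cell_open a b n Hab Hn0 k t Ht), <- INR_IZR_INZ. reflexivity. }
  exists (mkStepFun (existT _ _ (existT _ _ Hlow))).
  exists (mkStepFun (existT _ _ (existT _ _ Hjump))).
  split.
  - intros t Ht. rewrite Rmin_left, Rmax_right in Ht by lra.
    apply lower_step_error; assumption.
  - unfold RiemannInt_SF, subdivision_val, subdivision. cbn [pre projT1 projT2].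
    destruct (Rle_dec a b) as [_|]; [|lra].
    rewrite (Int_SF_grid a b n Hn0), (sum_jumps a b n Hab Hn0 f Hf).
    assert (H := mesh_pos a b n Hab Hn0).
    rewrite Rabs_right by (apply Rle_ge, Rmult_le_pos; lra).
    assert (HnR : 0 < INR n) by (apply lt_0_INR; exact Hn0).
    apply Rmult_lt_reg_r with (INR n / eps); [apply Rdiv_lt_0_compat; lra|].
    unfold mesh. field_simplify; [|lra|lra]. unfold Rdiv in Hn |- *. lra.
Qed.

Lemma ex_RInt_monotone (f : R -> R) (a b : R) : a <= b ->
  (forall u v, a <= u -> u <= v -> v <= b -> f u <= f v) -> ex_RInt f a b.
Proof.
  intros Hab Hf. destruct (Req_dec a b) as [<-|Hne]; [apply ex_RInt_point|].
  apply ex_RInt_Reals_1, Riemann_integrable_monotone; [lra | exact Hf].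
Qed.

Lemma ex_RInt_crps_integrand (G : R -> R) (a b y : R) : a <= y <= b ->
  (forall u v, a <= u -> u <= v -> v <= b -> G u <= G v) ->
  (forall u, a <= u <= b -> 0 <= G u <= 1) ->
  ex_RInt (fun u => (G u - Heav (u - y)) ^ 2) a b.
Proof.
  intros Hy HG HG01.
  apply ex_RInt_Chasles with y.
  - apply (ex_RInt_ext (V := R_NormedModule) (fun u => G u ^ 2)).
    + intros u Hu. rewrite Rmin_left, Rmax_right in Hu by lra.
      unfold Heav. destruct (Rlt_dec (u - y) 0); [|lra].
      change (G u ^ 2 = (G u - 0) ^ 2). ring.
    + apply ex_RInt_monotone; [lra|]. intros u v Hu Huv Hv.
      assert (G u <= G v) by (apply HG; lra). assert (0 <= G u) by (apply HG01; lra). nra.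
  - apply (ex_RInt_ext (V := R_NormedModule) (fun u => - (- (G u - 1) ^ 2))).
    + intros u Hu. rewrite Rmin_left, Rmax_right in Hu by lra.
      unfold Heav. destruct (Rlt_dec (u - y) 0); [lra|].
      change (- (- (G u - 1) ^ 2) = (G u - 1) ^ 2). ring.
    + apply (ex_RInt_opp (V := R_NormedModule) (fun u => - (G u - 1) ^ 2)).
      apply ex_RInt_monotone; [lra|]. intros u v Hu Huv Hv.
      assert (G u <= G v) by (apply HG; lra). assert (G v <= 1) by (apply HG01; lra). nra.
Qed.

Lemma exp_le_exp x y : x <= y -> exp x <= exp y.
Proof. intros [Hlt|<-]; [left; apply exp_increasing, Hlt | right; reflexivity]. Qed.

Lemma nonneg_of_convex_flat_at_0 (h h' h'' : R -> R) :
  (forall s, derivable_pt_lim h s (h' s)) -> (forall s, derivable_pt_lim h' s (h'' s)) ->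
  (forall s, 0 <= h'' s) -> h 0 = 0 -> h' 0 = 0 -> forall s, 0 <= h s.
Proof.
  intros Hh Hh' Hh'' H0 H0' s.
  destruct (Rtotal_order s 0) as [Hs|[->|Hs]]; [| lra |].
  - destruct (MVT_cor2 h h' s 0 Hs (fun c _ => Hh c)) as [c [Hc [_ Hc0]]].
    destruct (MVT_cor2 h' h'' c 0 Hc0 (fun c _ => Hh' c)) as [c' [Hc' _]].
    assert (h' c <= 0) by (assert (H := Hh'' c'); nra). nra.
  - destruct (MVT_cor2 h h' 0 s Hs (fun c _ => Hh c)) as [c [Hc [Hc0 _]]].
    destruct (MVT_cor2 h' h'' 0 c Hc0 (fun c _ => Hh' c)) as [c' [Hc' _]].
    assert (0 <= h' c) by (assert (H := Hh'' c'); nra). nra.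
Qed.

Lemma ln_bernoulli_mgf_le (g s : R) : 0 <= g <= 1 ->
  ln (1 - g + g * exp s) <= g * s + s ^ 2 / 8.
Proof.
  intros Hg.
  set (D := fun s => 1 - g + g * exp s).
  assert (HD : forall s, 0 < D s) by (intros r; unfold D; assert (H := exp_pos r); nra).
  set (h := fun s => s ^ 2 / 8 + g * s - ln (D s)).
  set (h' := fun s => s / 4 + g - g * exp s / D s).
  set (h'' := fun s => / 4 - g * exp s * (1 - g) / D s ^ 2).
  assert (Hh : forall s, derivable_pt_lim h s (h' s)).
  { intros r. apply is_derive_Reals. assert (H := HD r). unfold h, h', D in *.
    auto_derive; [lra | field; lra]. }
  assert (Hh' : forall s, derivable_pt_lim h' s (h'' s)).
  { intros r. apply is_derive_Reals. assert (H := HD r). unfold h', h'', D in *.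
    auto_derive; [lra | field; lra]. }
  assert (Hh'' : forall s, 0 <= h'' s).
  { intros r. unfold h''. assert (H := HD r). assert (He := exp_pos r).
    (* AM-GM: 4 (1 - g) (g e^r) <= ((1 - g) + g e^r)^2 = D r ^ 2 *)
    assert (g * exp r * (1 - g) <= D r ^ 2 / 4)
      by (unfold D; assert (0 <= (1 - g - g * exp r) ^ 2) by apply pow2_ge_0; nra).
    assert (g * exp r * (1 - g) / D r ^ 2 <= / 4) by (apply Rle_div_l; [apply pow_lt |]; lra).
    lra. }
  assert (HD0 : D 0 = 1) by (unfold D; rewrite exp_0; ring).
  assert (H0 : h 0 = 0) by (unfold h; rewrite HD0, ln_1; field).
  assert (H0' : h' 0 = 0) by (unfold h'; rewrite HD0, exp_0; field).
  assert (H := nonneg_of_convex_flat_at_0 h h' h'' Hh Hh' Hh'' H0 H0' s).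
  unfold h in H. fold (D s). lra.
Qed.

Lemma hoeffding_lemma (g s : R) : 0 <= g <= 1 ->
  (1 - g) * exp (- g * s) + g * exp ((1 - g) * s) <= exp (s ^ 2 / 8).
Proof.
  intros Hg.
  assert (HD : 0 < 1 - g + g * exp s) by (assert (H := exp_pos s); nra).
  replace ((1 - g) * exp (- g * s) + g * exp ((1 - g) * s))
    with (exp (- g * s) * (1 - g + g * exp s))
    by (replace ((1 - g) * s) with (- g * s + s) by ring; rewrite exp_plus; ring).
  replace (s ^ 2 / 8) with (- g * s + (g * s + s ^ 2 / 8)) by ring.
  rewrite exp_plus. apply Rmult_le_compat_l; [left; apply exp_pos|].
  rewrite <- (exp_ln (1 - g + g * exp s)) by exact HD.
  apply exp_le_exp, ln_bernoulli_mgf_le, Hg.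
Qed.

Lemma square_loss_mix_bound (g x : R) : 0 <= g <= 1 ->
  (1 - g) * exp (-2 * (1 - g) ^ 2) * exp (-2 * x ^ 2)
  + g * exp (-2 * g ^ 2) * exp (-2 * (1 - x) ^ 2)
  <= exp (-2 * g ^ 2) * exp (-2 * (1 - g) ^ 2).
Proof.
  intros Hg. set (d := x - g).
  set (P := exp (-2 * g ^ 2) * exp (-2 * (1 - g) ^ 2) * exp (-2 * d ^ 2)).
  assert (HP : 0 <= P) by (unfold P; left; repeat apply Rmult_lt_0_compat; apply exp_pos).
  replace ((1 - g) * exp (-2 * (1 - g) ^ 2) * exp (-2 * x ^ 2)
           + g * exp (-2 * g ^ 2) * exp (-2 * (1 - x) ^ 2))
    with (P * ((1 - g) * exp (- g * (4 * d)) + g * exp ((1 - g) * (4 * d)))).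
  2: { unfold P. rewrite <- !exp_plus.
       replace (-2 * x ^ 2) with (-2 * g ^ 2 + -2 * d ^ 2 + - g * (4 * d)) by (unfold d; ring).
       replace (-2 * (1 - x) ^ 2) with (-2 * (1 - g) ^ 2 + -2 * d ^ 2 + (1 - g) * (4 * d))
         by (unfold d; ring).
       rewrite !exp_plus. ring. }
  apply Rle_trans with (P * exp ((4 * d) ^ 2 / 8)).
  - apply Rmult_le_compat_l; [exact HP | apply hoeffding_lemma, Hg].
  - assert (E : exp (-2 * d ^ 2) * exp ((4 * d) ^ 2 / 8) = 1).
    { rewrite <- exp_plus, <- exp_0. f_equal. field. }
    unfold P. rewrite Rmult_assoc, E. lra.
Qed.

Definition aggregate (n : nat) (p x : nat -> R) : R :=
  1 / 2 - 1 / 4 * ln (sumR n (fun i => p i * exp (-2 * (x i) ^ 2))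
                      / sumR n (fun i => p i * exp (-2 * (1 - x i) ^ 2))).

Definition mix_loss (n : nat) (p x : nat -> R) : R :=
  -1 / 2 * ln (sumR n (fun i => p i * exp (-2 * x i))).

Section Aggregate.
Variables (n : nat) (p : nat -> R).
Hypothesis Hp : forall i, (i < n)%nat -> 0 <= p i.
Hypothesis Hs : sumR n p = 1.

Let A (x : nat -> R) := sumR n (fun i => p i * exp (-2 * (x i) ^ 2)).
Let B (x : nat -> R) := sumR n (fun i => p i * exp (-2 * (1 - x i) ^ 2)).

Lemma sum_exp_pos (e : nat -> R) : 0 < sumR n (fun i => p i * exp (e i)).
Proof. apply sumR_mult_pos; [exact Hp | lra | intros; apply exp_pos]. Qed.

Section Forecast.
Variable x : nat -> R.
Hypothesis Hx : forall i, (i < n)%nat -> 0 <= x i <= 1.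

Lemma aggregate_ratio_bounds : exp (-2) * B x <= A x <= exp 2 * B x.
Proof.
  unfold A, B. rewrite <- !sumR_scal.
  assert (Hsplit : forall i, exp (-2 * x i ^ 2) = exp (2 - 4 * x i) * exp (-2 * (1 - x i) ^ 2))
    by (intros i; rewrite <- exp_plus; f_equal; ring).
  split; apply sumR_le; intros i Hi; rewrite Hsplit;
    assert (Hpe : 0 <= p i * exp (-2 * (1 - x i) ^ 2))
      by (apply Rmult_le_pos; [apply Hp, Hi | left; apply exp_pos]);
    assert (H := Hx i Hi).
  - assert (exp (-2) <= exp (2 - 4 * x i)) by (apply exp_le_exp; lra). nra.
  - assert (exp (2 - 4 * x i) <= exp 2) by (apply exp_le_exp; lra). nra.
Qed.

Lemma aggregate_in_01 : 0 <= aggregate n p x <= 1.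
Proof.
  destruct aggregate_ratio_bounds as [Hlo Hhi].
  assert (HA : 0 < A x) by apply sum_exp_pos. assert (HB : 0 < B x) by apply sum_exp_pos.
  apply ln_le in Hlo; [|apply Rmult_lt_0_compat; [apply exp_pos | exact HB]].
  apply ln_le in Hhi; [|exact HA].
  rewrite ln_mult, ln_exp in Hlo, Hhi by (apply exp_pos || exact HB).
  unfold aggregate. fold (A x) (B x). rewrite ln_div by assumption. lra.
Qed.

Lemma aggregate_exp_bounds :
  A x <= exp (-2 * aggregate n p x ^ 2) /\ B x <= exp (-2 * (1 - aggregate n p x) ^ 2).
Proof.
  set (g := aggregate n p x). assert (Hg : 0 <= g <= 1) by apply aggregate_in_01.
  assert (HA : 0 < A x) by apply sum_exp_pos. assert (HB : 0 < B x) by apply sum_exp_pos.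
  set (P1 := exp (-2 * g ^ 2)). set (P2 := exp (-2 * (1 - g) ^ 2)).
  assert (HP1 : 0 < P1) by apply exp_pos. assert (HP2 : 0 < P2) by apply exp_pos.
  (* g is chosen so that A x / B x = exp (2 - 4 g) = P1 / P2 *)
  assert (Hratio : A x * P2 = B x * P1).
  { assert (E : A x = B x * exp (2 - 4 * g)).
    { replace (2 - 4 * g) with (ln (A x / B x)) by (unfold g, aggregate; fold (A x) (B x); field).
      rewrite exp_ln by (apply Rdiv_lt_0_compat; assumption). field. lra. }
    rewrite E. unfold P1, P2. rewrite Rmult_assoc, <- exp_plus. f_equal. f_equal. ring. }
  set (r := A x / P1).
  assert (HAr : A x = r * P1) by (unfold r; field; lra).
  assert (HBr : B x = r * P2).
  { apply Rmult_eq_reg_r with P1; [|lra]. rewrite <- Hratio, HAr. ring. }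
  assert (Hmix : (1 - g) * P2 * A x + g * P1 * B x <= P1 * P2).
  { apply Rle_trans with (P1 * P2 * sumR n p); [|rewrite Hs; lra].
    unfold A, B. rewrite <- !sumR_scal, <- sumR_plus. apply sumR_le. intros i Hi.
    assert (H := Rmult_le_compat_l _ _ _ (Hp i Hi) (square_loss_mix_bound g (x i) Hg)).
    fold P1 P2 in H. ring_simplify in H. ring_simplify. lra. }
  rewrite HAr, HBr in Hmix |- *.
  assert (r <= 1).
  { apply Rmult_le_reg_r with (P1 * P2); [apply Rmult_lt_0_compat; lra|]. nra. }
  split; nra.
Qed.

Lemma aggregate_mixable (w : R) : w = 0 \/ w = 1 ->
  (aggregate n p x - w) ^ 2 <= mix_loss n p (fun i => (x i - w) ^ 2).
Proof.
  destruct aggregate_exp_bounds as [HAg HBg].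
  assert (HA : 0 < A x) by apply sum_exp_pos. assert (HB : 0 < B x) by apply sum_exp_pos.
  apply ln_le in HAg, HBg; [|assumption..]. rewrite ln_exp in HAg, HBg.
  unfold mix_loss. intros [-> | ->].
  - rewrite (sumR_ext n _ (fun i => p i * exp (-2 * x i ^ 2)))
      by (intros; rewrite Rminus_0_r; reflexivity).
    fold (A x). lra.
  - rewrite (sumR_ext n _ (fun i => p i * exp (-2 * (1 - x i) ^ 2)))
      by (intros; do 3 f_equal; ring).
    fold (B x). replace ((aggregate n p x - 1) ^ 2) with ((1 - aggregate n p x) ^ 2) by ring. lra.
Qed.

End Forecast.

Lemma aggregate_monotone (x x' : nat -> R) :
  (forall i, (i < n)%nat -> 0 <= x i /\ x i <= x' i /\ x' i <= 1) ->
  aggregate n p x <= aggregate n p x'.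
Proof.
  intros Hxx'.
  assert (HA : A x' <= A x).
  { apply sumR_le. intros i Hi. destruct (Hxx' i Hi) as [H0 [H1 H2]].
    apply Rmult_le_compat_l; [apply Hp, Hi | apply exp_le_exp; nra]. }
  assert (HB : B x <= B x').
  { apply sumR_le. intros i Hi. destruct (Hxx' i Hi) as [H0 [H1 H2]].
    apply Rmult_le_compat_l; [apply Hp, Hi | apply exp_le_exp; nra]. }
  apply ln_le in HA, HB; try apply sum_exp_pos.
  unfold aggregate. fold (A x) (B x) (A x') (B x').
  rewrite !ln_div by apply sum_exp_pos. lra.
Qed.

End Aggregate.

Lemma mix_loss_tangent n (p x m : nat -> R) :
  (forall i, (i < n)%nat -> 0 <= p i) -> 0 < sumR n (fun i => p i * exp (-2 * m i)) ->
  mix_loss n p x <= mix_loss n p m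
    + sumR n (fun i => p i * exp (-2 * m i) / sumR n (fun j => p j * exp (-2 * m j)) * (x i - m i)).
Proof.
  intros Hp HZ.
  set (Z := sumR n (fun i => p i * exp (-2 * m i))) in *.
  set (T := sumR n (fun i => p i * exp (-2 * m i) * (x i - m i))).
  assert (HQ : sumR n (fun i => p i * exp (-2 * m i) / Z * (x i - m i)) = T / Z).
  { unfold T, Rdiv. rewrite (Rmult_comm _ (/ Z)), <- sumR_scal. apply sumR_ext. intros; ring. }
  rewrite HQ.
  set (c := -2 * (T / Z)).
  set (S := sumR n (fun i => p i * exp (-2 * x i))).
  (* tangent line of exp at c: exp z >= exp c * (1 + z - c) *)
  assert (HS : exp c * Z <= S).
  { replace (exp c * Z) with
        (sumR n (fun i => p i * exp (-2 * m i) * (exp c * (1 + -2 * (x i - m i) - c)))).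
    2: { replace (exp c * Z) with (exp c * ((1 - c) * Z + -2 * T)) by (unfold c; field; lra).
         unfold Z, T. rewrite <- !sumR_scal, <- sumR_plus, <- sumR_scal.
         apply sumR_ext. intros; ring. }
    apply sumR_le. intros i Hi.
    replace (p i * exp (-2 * x i)) with (p i * exp (-2 * m i) * exp (-2 * (x i - m i)))
      by (rewrite Rmult_assoc, <- exp_plus; do 2 f_equal; ring).
    apply Rmult_le_compat_l; [apply Rmult_le_pos; [apply Hp, Hi | left; apply exp_pos]|].
    set (z := -2 * (x i - m i)).
    replace (exp z) with (exp c * exp (z - c)) by (rewrite <- exp_plus; f_equal; ring).
    apply Rmult_le_compat_l; [left; apply exp_pos|].
    assert (H := exp_ineq1_le (z - c)). lra. }
  assert (Hc := exp_pos c).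
  apply ln_le in HS; [|apply Rmult_lt_0_compat; assumption].
  rewrite ln_mult, ln_exp in HS by assumption.
  unfold mix_loss. fold Z S. unfold c in HS. lra.
Qed.

Lemma is_RInt_sumR n (h : nat -> R -> R) (v : nat -> R) (a b : R) :
  (forall i, (i < n)%nat -> is_RInt (h i) a b (v i)) ->
  is_RInt (fun u => sumR n (fun i => h i u)) a b (sumR n v).
Proof.
  induction n as [|n IH]; intros Hh; simpl.
  - assert (H := is_RInt_const (V := R_NormedModule) a b 0).
    change (scal (b - a) 0) with ((b - a) * 0) in H. rewrite Rmult_0_r in H. exact H.
  - apply (is_RInt_plus (V := R_NormedModule)); [apply IH; intros i Hi|]; apply Hh; lia.
Qed.

Lemma is_RInt_centered_sum (a b c : R) n (q m : nat -> R) (l : nat -> R -> R) :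
  (forall i, (i < n)%nat -> is_RInt (l i) a b ((b - a) * m i)) ->
  is_RInt (fun u => c + sumR n (fun i => q i * (l i u - m i))) a b ((b - a) * c).
Proof.
  intros Hl.
  replace ((b - a) * c) with ((b - a) * c + sumR n (fun i => q i * ((b - a) * m i - (b - a) * m i)))
    by (rewrite (sumR_ext n _ (fun _ => 0)), sumR_const by (intros; ring); ring).
  apply (is_RInt_plus (V := R_NormedModule)); [apply (is_RInt_const (V := R_NormedModule))|].
  apply is_RInt_sumR. intros i Hi. apply (is_RInt_scal (V := R_NormedModule)).
  apply (is_RInt_minus (V := R_NormedModule)); [apply Hl, Hi|].
  apply (is_RInt_const (V := R_NormedModule)).
Qed.

Lemma Heav_cases x : Heav x = 0 \/ Heav x = 1.
Proof. unfold Heav. destruct (Rlt_dec x 0); auto. Qed.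

Lemma crps_aggregate_le (a b y : R) (n : nat) (p : nat -> R) (F : nat -> R -> R) :
  a < b -> (forall i, (i < n)%nat -> 0 <= p i) -> sumR n p = 1 -> a <= y <= b ->
  (forall i, (i < n)%nat -> forall u v, a <= u -> u <= v -> v <= b -> F i u <= F i v) ->
  (forall i, (i < n)%nat -> forall u, a <= u <= b -> 0 <= F i u <= 1) ->
  CRPS a b (fun u => aggregate n p (fun i => F i u)) y
  <= (b - a) * mix_loss n p (fun i => CRPS a b (F i) y / (b - a)).
Proof.
  intros Hab Hp Hs Hy HFmono HF01.
  set (l := fun i u => (F i u - Heav (u - y)) ^ 2).
  set (m := fun i => CRPS a b (F i) y / (b - a)).
  set (Z := sumR n (fun i => p i * exp (-2 * m i))).
  assert (HZ : 0 < Z) by apply (sum_exp_pos n p Hp Hs).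
  set (q := fun i => p i * exp (-2 * m i) / Z).
  set (bound := fun u => mix_loss n p m + sumR n (fun i => q i * (l i u - m i))).
  assert (Hbound : is_RInt bound a b ((b - a) * mix_loss n p m)).
  { apply is_RInt_centered_sum. intros i Hi.
    replace ((b - a) * m i) with (CRPS a b (F i) y) by (unfold m; field; lra).
    apply (RInt_correct (V := R_CompleteNormedModule)).
    apply ex_RInt_crps_integrand; [exact Hy | apply HFmono, Hi | apply HF01, Hi]. }
  rewrite <- (is_RInt_unique _ _ _ _ Hbound). unfold CRPS at 1.
  apply RInt_le; [lra | | eexists; exact Hbound |].
  - apply ex_RInt_crps_integrand; [exact Hy | |].
    + intros u v Hu Huv Hv. apply aggregate_monotone; [exact Hp | exact Hs |]. intros i Hi.
      assert (HFu := HF01 i Hi u ltac:(lra)). assert (HFv := HF01 i Hi v ltac:(lra)).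
      assert (F i u <= F i v) by (apply HFmono; assumption). lra.
    + intros u Hu. apply aggregate_in_01; [exact Hp | exact Hs |].
      intros i Hi. apply HF01; assumption.
  - intros u Hu. apply Rle_trans with (mix_loss n p (fun i => l i u)).
    + apply aggregate_mixable; [exact Hp | exact Hs | | apply Heav_cases].
      intros i Hi. apply HF01; [exact Hi | lra].
    + apply mix_loss_tangent; assumption.
Qed.

Section Protocol.
Variables (a b : R) (N : nat) (Fexp : nat -> nat -> R -> R) (y : nat -> R).
Hypotheses (Hab : a < b) (HN : (1 <= N)%nat).

Local Notation w := (weight a b N Fexp y).
Local Notation loss i t := (CRPS a b (Fexp i t) (y t)).

Definition total_weight (t : nat) : R := sumR N (fun j => w j t).

Lemma weight_pos j t : 0 < w j t.
Proof.
  induction t as [|t IH]; simpl.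
  - apply Rdiv_lt_0_compat; [lra | apply lt_0_INR; lia].
  - apply Rmult_lt_0_compat; [exact IH | apply exp_pos].
Qed.

Lemma ln_weight i t : ln (w i t) = - ln (INR N) - 2 / (b - a) * sumR t (fun s => loss i s).
Proof.
  induction t as [|t IH]; simpl.
  - unfold Rdiv. rewrite Rmult_1_l, ln_Rinv by (apply lt_0_INR; lia). ring.
  - rewrite ln_mult, ln_exp, IH by (apply weight_pos || apply exp_pos). ring.
Qed.

Lemma weight_le_total_weight i t : (i < N)%nat -> w i t <= total_weight t.
Proof. apply (sumR_ge_term N (fun j => w j t)). intros; left; apply weight_pos. Qed.

Lemma total_weight_pos t : 0 < total_weight t.
Proof.
  apply Rlt_le_trans with (w 0%nat t); [apply weight_pos | apply weight_le_total_weight; lia].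
Qed.

Lemma total_weight_0 : total_weight 0 = 1.
Proof.
  unfold total_weight. simpl. rewrite sumR_const. field. apply not_0_INR. lia.
Qed.

Lemma wstar_sum t : sumR N (fun j => wstar a b N Fexp y j t) = 1.
Proof.
  unfold wstar, Rdiv. fold (total_weight t).
  rewrite (sumR_ext N _ (fun j => / total_weight t * w j t)) by (intros; ring).
  rewrite sumR_scal. fold (total_weight t). field. apply Rgt_not_eq, total_weight_pos.
Qed.

Lemma total_weight_S t : total_weight (S t) = total_weight t
  * sumR N (fun j => wstar a b N Fexp y j t * exp (- (2 / (b - a)) * loss j t)).
Proof.
  unfold wstar. rewrite <- sumR_scal. apply sumR_ext. intros j _. simpl. fold (total_weight t).
  field. apply Rgt_not_eq, total_weight_pos.
Qed.

Lemma learner_round_loss t :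
  (forall i, (i < N)%nat -> is_distribution a b (Fexp i t)) -> a <= y t <= b ->
  CRPS a b (learner a b N Fexp y t) (y t)
  <= - (b - a) / 2 * (ln (total_weight (S t)) - ln (total_weight t)).
Proof.
  intros Hdist Hy.
  assert (Hp : forall j, (j < N)%nat -> 0 <= wstar a b N Fexp y j t).
  { intros j _. left. apply Rdiv_lt_0_compat; [apply weight_pos | apply total_weight_pos]. }
  rewrite total_weight_S, ln_mult
    by (apply total_weight_pos || apply (sum_exp_pos _ _ Hp (wstar_sum t))).
  change (learner a b N Fexp y t)
    with (fun u => aggregate N (fun j => wstar a b N Fexp y j t) (fun j => Fexp j t u)).
  eapply Rle_trans.
  - apply (crps_aggregate_le _ _ _ _ _ (fun j => Fexp j t));
      [exact Hab | exact Hp | apply wstar_sum | exact Hy | |]; intros j Hj.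
    + exact (proj1 (Hdist j Hj)).
    + exact (proj1 (proj2 (Hdist j Hj))).
  - unfold mix_loss.
    rewrite (sumR_ext N _ (fun j => wstar a b N Fexp y j t * exp (- (2 / (b - a)) * loss j t)))
      by (intros; do 2 f_equal; field; lra).
    right. field.
Qed.

Lemma learner_cumulative_loss T :
  (forall i t, (i < N)%nat -> (t < T)%nat -> is_distribution a b (Fexp i t)) ->
  (forall t, (t < T)%nat -> a <= y t <= b) ->
  sumR T (fun t => CRPS a b (learner a b N Fexp y t) (y t))
  <= - (b - a) / 2 * ln (total_weight T).
Proof.
  intros Hdist Hy.
  apply Rle_trans with
    (sumR T (fun t => - (b - a) / 2 * (ln (total_weight (S t)) - ln (total_weight t)))).
  - apply sumR_le. intros t Ht.
    apply learner_round_loss; [intros i Hi; apply Hdist | apply Hy]; lia.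
  - rewrite sumR_scal, (sumR_telescope T (fun t => ln (total_weight t))), total_weight_0, ln_1.
    right. ring.
Qed.

End Protocol.

Theorem theorem3 (a b : R) (N T : nat) (Fexp : nat -> nat -> R -> R) (y : nat -> R) :
  a < b -> (1 <= N)%nat -> (1 <= T)%nat ->
  (forall i t, (i < N)%nat -> (t < T)%nat -> is_distribution a b (Fexp i t)) ->
  (forall t, (t < T)%nat -> a <= y t <= b) ->
  forall i, (i < N)%nat ->
    sumR T (fun t => CRPS a b (learner a b N Fexp y t) (y t))
    <= sumR T (fun t => CRPS a b (Fexp i t) (y t)) + (b - a) / 2 * ln (INR N).
Proof.
  intros Hab HN _ Hdist Hy i Hi.
  eapply Rle_trans; [apply learner_cumulative_loss; assumption|].
  assert (Hwi : ln (weight a b N Fexp y i T) <= ln (total_weight a b N Fexp y T))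
    by (apply ln_le; [apply weight_pos | apply weight_le_total_weight]; assumption).
  rewrite ln_weight in Hwi by assumption.
  set (L := sumR T (fun t => CRPS a b (Fexp i t) (y t))) in *.
  assert (Hscaled : (b - a) / 2 * - ln (total_weight a b N Fexp y T)
                    <= (b - a) / 2 * (ln (INR N) + 2 / (b - a) * L))
    by (apply Rmult_le_compat_l; lra).
  replace ((b - a) / 2 * (ln (INR N) + 2 / (b - a) * L)) with (L + (b - a) / 2 * ln (INR N))
    in Hscaled by (field; lra).
  lra.
Qed.
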